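(* Let $G=(V,E)$ and $G'=(V',E')$ be graphs, and let $(u,v)$ be an ordered edge of $G$ and $(u',v')$ an ordered edge of $G'$. Then for every $t\ge0$: (1) If $\mathrm{eb}^{(t)}(G)=\mathrm{eb}^{(t)}(G')$, then $\mathrm{tp}^t(G)=\mathrm{tp}^t(G')$. (2) If $\mathrm{eb}^{(t)}(G,(u,v))=\mathrm{eb}^{(t)}(G',(u',v'))$ and $\mathrm{eb}^{(t)}(G)=\mathrm{eb}^{(t)}(G')$, then $\mathrm{tp}^t(G,u)=\mathrm{tp}^t(G',u')$, $\mathrm{tp}^t(G,v)=\mathrm{tp}^t(G',v')$, and $\mathrm{tp}^t(G,(u,v))=\mathrm{tp}^t(G',(u',v'))$.
   Context: All graphs are finite, simple and undirected, without isolated vertices; $N(v)$ denotes the neighborhood of $v$. An ordered edge of $G=(V,E)$ is a pair $(u,v)$ with $\{u,v\}\in E$. EB-1WL coloring: $\mathrm{eb}^{(0)}(G,(u,v))=1$ for every ordered edge, and $\mathrm{eb}^{(\ell+1)}(G,(u,v)) = \big(\mathrm{eb}^{(\ell)}(G,(u,v)),\ \{\!\{\mathrm{eb}^{(\ell)}(G,(u,x)) : x\in N(u)\}\!\},\ \{\!\{(\mathrm{eb}^{(\ell)}(G,(u,y)),\mathrm{eb}^{(\ell)}(G,(v,y))) : y\in N(u)\cap N(v)\}\!\},\ \{\!\{\mathrm{eb}^{(\ell)}(G,(v,z)) : z\in N(v)\}\!\}\big)$. $\mathrm{eb}^{(t)}(G)$ is the multiset of $\mathrm{eb}^{(t)}(G,(u,v))$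 over all ordered edges $(u,v)$ of $G$. Logic: first-order logic over the vocabulary with one binary relation $E$, where $E(x,y)$ holds of $(u,v)$ iff $\{u,v\}$ is an edge. For a tuple $\bar x=(x_1,\dots,x_n)$ of distinct variables, $\mathrm{clique}(\bar x):=\bigwedge_{1\le i<j\le n}E(x_i,x_j)$ (empty conjunction = true). CFOC is the smallest set of formulas such that: (1) $\mathrm{clique}(\bar x)$ is in CFOC; (2) if $\phi(\bar x)\in$ CFOC then $\mathrm{clique}(\bar x)\wedge\neg\phi(\bar x)\in$ CFOC; (3) if $\phi(\bar x),\psi(\bar y)\in$ CFOC then $\mathrm{clique}(\bar z)\wedge(\phi(\bar x)\star\psi(\bar y))\in$ CFOC for $\star\in\{\wedge,\vee\}$, where $\bar z$ lists each variable of $\bar x$ and $\bar y$ exactly once; (4) if $\phi(\bar x,y)\in$ CFOC then $\mathrm{clique}(\bar x)\wedge\exists^{\ge k}y\,\phi(\bar x,y)\in$ CFOC for every integer $k\ge1$ ($\exists^{\ge k}$: at least $k$ witnesses). $\mathrm{CFOC}^3$: CFOC formulas using at most three distinct variables. For a graph $G$ and a tuple $\bar v$ of vertices (possibly empty), the $t$-type $\mathrm{tp}^t(G,\bar v)$ is the set of $\mathrm{CFOC}^3$ formulas $\phi(\bar x)$ of quantifier depth $t$ (with $|\bar x|=|\bar v|$) such that $G\models\phi(\bar v)$; $\mathrm{tp}^t(G)$ is the set of such sentences true in $G$. *)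

From mathcomp Require Import all_boot.
Set Implicit Arguments.
Unset Strict Implicit.
Unset Printing Implicit Defensive.

Definition is_graph (T : finType) (e : rel T) : Prop :=
  symmetric e /\ irreflexive e /\ (forall v : T, exists u : T, e v u).

Definition nbhd (T : finType) (e : rel T) (v : T) : {set T} := [set x | e v x].

Definition oedges (T : finType) (e : rel T) : {set T * T} :=
  [set p | e p.1 p.2].

(* Multiset equality {{ c x : x in A }} = {{ c' y : y in B }}, where the
   relation R x y expresses "the colour of x equals the colour of y":
   a bijection between A and B matching equal colours. *)
Definition mset_eq (T T' : finType) (A : {set T}) (B : {set T'})
  (R : T -> T' -> Prop) : Prop :=
  exists f : {x : T | x \in A} -> {y : T' | y \in B},
    bijective f /\ forall x, R (val x) (val (f x)).

(* eb_eq t e e' p p'  <->  eb^(t)(G,p) = eb^(t)(G',p')  *)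
Fixpoint eb_eq (t : nat) (T T' : finType) (e : rel T) (e' : rel T')
  (p : T * T) (p' : T' * T') {struct t} : Prop :=
  match t with
  | 0 => True
  | s.+1 =>
      [/\ eb_eq s e e' p p',
          mset_eq (nbhd e p.1) (nbhd e' p'.1)
            (fun x x' => eb_eq s e e' (p.1, x) (p'.1, x')),
          mset_eq (nbhd e p.1 :&: nbhd e p.2) (nbhd e' p'.1 :&: nbhd e' p'.2)
            (fun y y' => eb_eq s e e' (p.1, y) (p'.1, y') /\
                         eb_eq s e e' (p.2, y) (p'.2, y')) &
          mset_eq (nbhd e p.2) (nbhd e' p'.2)
            (fun z z' => eb_eq s e e' (p.2, z) (p'.2, z'))]
  end.

Definition eb_graph_eq (t : nat) (T T' : finType) (e : rel T) (e' : rel T') : Prop :=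
  mset_eq (oedges e) (oedges e') (eb_eq t e e').

(* Variables: the three variables x_0, x_1, x_2 (type 'I_3).
   Each constructor carries the declared free-variable tuple of the formula. *)
Definition var := 'I_3.

Inductive form : Type :=
| FClique of seq var
| FNeg of seq var & form                  (* clique(xs) /\ ~ phi(xs) *)
| FAnd of seq var & form & form           (* clique(zs) /\ (phi /\ psi) *)
| FOr of seq var & form & form            (* clique(zs) /\ (phi \/ psi) *)
| FEx of seq var & nat & var & form.      (* clique(xs) /\ Ex>=k y. phi(xs,y) *)

Definition tup (f : form) : seq var :=
  match f with
  | FClique xs => xs
  | FNeg xs _ => xs
  | FAnd zs _ _ => zs
  | FOr zs _ _ => zs
  | FEx xs _ _ _ => xs
  end.

Definition union_tuple (zs xs ys : seq var) : bool :=
  uniq zs && [forall v : var, (v \in zs) == ((v \in xs) || (v \in ys))].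

Fixpoint wf (f : form) : bool :=
  match f with
  | FClique xs => uniq xs
  | FNeg xs g => wf g && (tup g == xs)
  | FAnd zs g h => [&& wf g, wf h & union_tuple zs (tup g) (tup h)]
  | FOr zs g h => [&& wf g, wf h & union_tuple zs (tup g) (tup h)]
  | FEx xs k y g => [&& wf g, 0 < k, uniq (rcons xs y) & tup g == rcons xs y]
  end.

Fixpoint qdepth (f : form) : nat :=
  match f with
  | FClique _ => 0
  | FNeg _ g => qdepth g
  | FAnd _ g h => maxn (qdepth g) (qdepth h)
  | FOr _ g h => maxn (qdepth g) (qdepth h)
  | FEx _ _ _ g => (qdepth g).+1
  end.

Section Semantics.
Variables (T : finType) (e : rel T).

(* partial assignments of vertices to variables *)
Definition adj (a b : option T) : bool :=
  match a, b with Some x, Some y => e x y | _, _ => false end.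

Definition clique_sat (xs : seq var) (a : var -> option T) : bool :=
  [forall i : var, forall j : var,
      [&& i \in xs, j \in xs & i != j] ==> adj (a i) (a j)].

Definition upd (a : var -> option T) (y : var) (w : T) : var -> option T :=
  fun i => if i == y then Some w else a i.

Fixpoint sat (f : form) (a : var -> option T) : bool :=
  match f with
  | FClique xs => clique_sat xs a
  | FNeg xs g => clique_sat xs a && ~~ sat g a
  | FAnd zs g h => clique_sat zs a && (sat g a && sat h a)
  | FOr zs g h => clique_sat zs a && (sat g a || sat h a)
  | FEx xs k y g => clique_sat xs a && (k <= #|[set w | sat g (upd a y w)]|)
  end.

Definition assign (xs : seq var) (vs : seq T) : var -> option T :=
  fun i => if i \in xs then nth None (map Some vs) (index i xs) else None.

Definition models (f : form) (vs : seq T) : bool := sat f (assign (tup f) vs).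

End Semantics.

Definition same_type (t : nat) (T T' : finType) (e : rel T) (e' : rel T')
  (vs : seq T) (vs' : seq T') : Prop :=
  forall f : form, wf f -> qdepth f <= t -> size (tup f) = size vs ->
    (models e f vs <-> models e' f vs').

From mathcomp Require Import all_boot.
Set Implicit Arguments.
Unset Strict Implicit.
Unset Printing Implicit Defensive.

(* By induction on CFOC^3 formulas: two assignments of the (at most two) free
   variables satisfy the same formulas of depth at most t when each assigned
   vertex starts an edge with the same eb^(t) colour as one starting at its
   partner, and distinct assigned vertices are adjacent with equal eb^(t)
   colours; the clique guard of every CFOC formula is what makes this invariant
   suffice. The only real case is a counting quantifier on a new variable: its
   witnesses are all vertices, the neighbours of the one assigned vertex, or the
   common neighbours of the two assigned vertices, and eb^(t+1) matches these
   through the multiset of all edge colours, the neighbour multiset, or the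
   common-neighbour multiset respectively. In the first case vertices are
   counted through ordered edges grouped by the degree d of their tail, a vertex
   of degree d being the tail of d edges; this is where the absence of isolated
   vertices is needed. *)

Lemma card_sep_sig (U : finType) (A : {set U}) (P : pred U) :
  #|[set x in A | P x]| = \sum_(x : {x : U | x \in A} | P (val x)) 1.
Proof.
by rewrite -sum1_card -(big_sub_cond A P (fun=> 1)); apply: eq_bigl => x; rewrite inE.
Qed.

Section Multisets.
Variables (T T' : finType).
Implicit Types (A : {set T}) (B : {set T'}) (R : T -> T' -> Prop).

Lemma mset_eq_sub A B R R2 :
  (forall x x', R x x' -> R2 x x') -> mset_eq A B R -> mset_eq A B R2.
Proof. by move=> RR2 [f [fb fR]]; exists f; split => // x; apply: RR2. Qed.

Lemma mset_eq_card_sep A B R (P : pred T) (P' : pred T') :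
  mset_eq A B R -> (forall x x', x \in A -> x' \in B -> R x x' -> P x = P' x') ->
  #|[set x in A | P x]| = #|[set x' in B | P' x']|.
Proof.
case=> f [fb fR] PP'; rewrite !card_sep_sig [RHS](reindex f) /=; last exact: onW_bij fb.
by apply: eq_bigl => x; exact: PP' (valP x) (valP (f x)) (fR x).
Qed.

Lemma mset_eq_card A B R : mset_eq A B R -> #|A| = #|B|.
Proof. by case=> f [fb _]; have := bij_eq_card fb; rewrite !card_sig. Qed.

End Multisets.

Section EdgeColours.
Variables (T T' : finType) (e : rel T) (e' : rel T').

Lemma eb_eq_rev t u v u' v' :
  eb_eq t e e' (u, v) (u', v') -> eb_eq t e e' (v, u) (v', u').
Proof.
elim: t u v u' v' => [//|t IH] u v u' v' /= [Huv Hu Huv2 Hv]; split => //; first exact: IH.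
rewrite setIC [nbhd e' v' :&: _]setIC; apply: mset_eq_sub Huv2 => x x' [].
by split.
Qed.

Lemma eb_eq_le s t p p' : s <= t -> eb_eq t e e' p p' -> eb_eq s e e' p p'.
Proof.
elim: t => [|t IH]; first by rewrite leqn0 => /eqP->.
by rewrite leq_eqVlt ltnS => /predU1P[->//|st] [Hp _ _ _]; apply: IH.
Qed.

Lemma eb_graph_eq_le s t : s <= t -> eb_graph_eq t e e' -> eb_graph_eq s e e'.
Proof. by move=> st; apply: mset_eq_sub => p p'; apply: eb_eq_le. Qed.

Lemma eb_eq_card_nbhd t p p' :
  eb_eq t.+1 e e' p p' -> #|nbhd e p.1| = #|nbhd e' p'.1|.
Proof. by case=> _ /mset_eq_card. Qed.

End EdgeColours.

Section Degrees.
Variables (U : finType) (f : rel U).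

Lemma card_oedges_tail (Q : pred U) :
  #|[set p in oedges f | Q p.1]| = \sum_(w | Q w) #|nbhd f w|.
Proof.
rewrite -sum1_card (eq_bigl (fun p : U * U => Q p.1 && f p.1 p.2)); last first.
  by move=> [w z]; rewrite !inE andbC.
rewrite -(pair_big_dep Q f (fun _ _ => 1)) /=.
by apply: eq_bigr => w _; rewrite -sum1_card; apply: eq_bigl => z; rewrite inE.
Qed.

Lemma card_oedges_tail_deg (Q : pred U) d :
  #|[set p in oedges f | Q p.1 && (#|nbhd f p.1| == d)]| =
  #|[set w | Q w && (#|nbhd f w| == d)]| * d.
Proof.
rewrite (card_oedges_tail (fun w => Q w && (#|nbhd f w| == d))).
rewrite (eq_bigr (fun=> d)) => [|w /andP[_ /eqP]//].
by rewrite sum_nat_const; congr (_ * _); apply: eq_card => w; rewrite inE.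
Qed.

Lemma card_by_degree (Q : pred U) n : #|U| <= n ->
  #|[set w | Q w]| = \sum_(d < n.+1) #|[set w | Q w && (#|nbhd f w| == d)]|.
Proof.
move=> Un; rewrite -sum1_card (partition_big (fun w => inord #|nbhd f w| : 'I_n.+1) predT) //.
apply: eq_bigr => d _; rewrite -sum1_card; apply: eq_bigl => w; rewrite !inE.
by rewrite -val_eqE /= inordK // ltnS (leq_trans (max_card _) Un).
Qed.

Lemma deg0_set0 (Q : pred U) : (forall v, exists u, f v u) ->
  [set w | Q w && (#|nbhd f w| == 0)] = set0.
Proof.
move=> noiso; apply/setP => w; rewrite !inE cards_eq0 andbC.
by have [z fwz] := noiso w; case: eqP => // /setP/(_ z); rewrite !inE fwz.
Qed.

End Degrees.

Lemma wf_uniq (g : form) : wf g -> uniq (tup g).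
Proof.
elim: g => /= [xs|xs g IH|zs g _ h _|zs g _ h _|xs k y g _] //.
- by case/andP=> /IH + /eqP<-.
- by case/and3P=> _ _ /andP[].
- by case/and3P=> _ _ /andP[].
- by case/and4P=> _ _; rewrite rcons_uniq => /andP[].
Qed.

Lemma union_tuple_subl zs xs ys : union_tuple zs xs ys -> {subset xs <= zs}.
Proof. by case/andP=> _ /forallP zsE i ixs; rewrite (eqP (zsE i)) ixs. Qed.

Lemma union_tuple_subr zs xs ys : union_tuple zs xs ys -> {subset ys <= zs}.
Proof. by case/andP=> _ /forallP zsE i iys; rewrite (eqP (zsE i)) iys orbT. Qed.

Lemma setId_subset_id (U : finType) (N : {set U}) (R : pred U) :
  [set x | R x] \subset N -> [set x in N | R x] = [set x | R x].
Proof. by move/setIidPr; rewrite setIdE. Qed.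

Section Satisfaction.
Variables (U : finType) (f : rel U).

Lemma clique_satP S a :
  reflect (forall i j, i \in S -> j \in S -> i != j -> adj f (a i) (a j))
          (clique_sat f S a).
Proof.
apply: (iffP forallP) => [cl i j iS jS ij | cl i].
  by have := forallP (cl i) j; rewrite iS jS ij.
by apply/forallP => j; apply/implyP => /and3P[iS jS ij]; apply: cl.
Qed.

Lemma sat_clique_tup g a : sat f g a -> clique_sat f (tup g) a.
Proof. by case: g => /= [xs|xs g|zs g h|zs g h|xs k y g] // /andP[]. Qed.

Lemma clique_upd_nbhd xs y a x i w :
  clique_sat f (rcons xs y) (upd a y x) -> y \notin xs -> i \in xs -> a i = Some w ->
  x \in nbhd f w.
Proof.
move/clique_satP => cl yxs ixs ai.
have iy : i != y by apply: contraNneq yxs => <-.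
have := cl i y; rewrite !mem_rcons !inE ixs eqxx orbT => /(_ isT isT iy).
by rewrite /upd eqxx (negbTE iy) ai.
Qed.

Lemma witnesses_sub_nbhd xs y (R : pred U) a i w :
  y \notin xs -> (forall x, R x -> clique_sat f (rcons xs y) (upd a y x)) ->
  i \in xs -> a i = Some w -> [set x | R x] \subset nbhd f w.
Proof.
move=> yxs cR ixs ai; apply/subsetP => x; rewrite inE => /cR cl.
exact: clique_upd_nbhd cl yxs ixs ai.
Qed.

Lemma assign_rcons xs y (vs : seq U) w :
  y \notin xs -> size vs = size xs ->
  assign (rcons xs y) (rcons vs w) =1 upd (assign xs vs) y w.
Proof.
move=> yxs szs i; rewrite /assign /upd -!cats1 mem_cat inE index_cat map_cat nth_cat.
rewrite size_map szs; case: eqP => [->|_].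
  by rewrite (negbTE yxs) /= eqxx addn0 ltnn subnn.
by rewrite orbF; case: ifP => // ixs; have := index_mem i xs; rewrite ixs => ->.
Qed.

Lemma upd_same (a : var -> option U) y w : upd a y w y = Some w.
Proof. by rewrite /upd eqxx. Qed.

Lemma upd_other (a : var -> option U) y w i : i != y -> upd a y w i = a i.
Proof. by rewrite /upd => /negbTE->. Qed.

End Satisfaction.

Section Equivalence.
Variables (T T' : finType) (e : rel T) (e' : rel T').
Hypotheses (sym : symmetric e) (sym' : symmetric e').
Hypotheses (noiso : forall v : T, exists u, e v u) (noiso' : forall v : T', exists u, e' v u).

Definition edge_equiv t (p : T * T) (p' : T' * T') : Prop :=
  [/\ e p.1 p.2, e' p'.1 p'.2 & eb_eq t e e' p p'].

(* eb only colours ordered edges, so a vertex is compared through an edge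
   leaving it. *)
Definition vertex_equiv t (w : T) (w' : T') : Prop :=
  exists z z', edge_equiv t (w, z) (w', z').

Lemma edge_equiv_rev t w z w' z' :
  edge_equiv t (w, z) (w', z') -> edge_equiv t (z, w) (z', w').
Proof. by case=> /= ewz ewz' H; split; rewrite /= 1?(sym, sym'); last exact: eb_eq_rev. Qed.

Lemma edge_equiv_le s t p p' : s <= t -> edge_equiv t p p' -> edge_equiv s p p'.
Proof. by move=> st [epp ep'p' H]; split => //; apply: eb_eq_le H. Qed.

Lemma card_vertices_eq t (P : pred T) (P' : pred T') :
  eb_graph_eq t.+1 e e' ->
  (forall w z w' z', edge_equiv t.+1 (w, z) (w', z') -> P w = P' w') ->
  #|[set w | P w]| = #|[set w' | P' w']|.
Proof.
move=> G PP'; rewrite (card_by_degree e P (leq_addr #|T'| #|T|)).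
rewrite (card_by_degree e' P' (leq_addl #|T| #|T'|)).
apply: eq_bigr => -[[|d] _] _ /=; first by rewrite !deg0_set0 // !cards0.
apply/eqP; rewrite -(eqn_pmul2r (ltn0Sn d)) -!card_oedges_tail_deg; apply/eqP.
apply: (mset_eq_card_sep G) => -[w z] [w' z']; rewrite !inE /= => ewz ewz' Hwz.
by rewrite (PP' w z w' z') ?(eb_eq_card_nbhd Hwz).
Qed.

Definition assign_equiv t (S : seq var) (a : var -> option T) (a' : var -> option T') : Prop :=
  (forall i, i \in S -> exists w w', [/\ a i = Some w, a' i = Some w' & vertex_equiv t w w']) /\
  (forall i j w1 w2 w1' w2', i \in S -> j \in S -> i != j ->
     a i = Some w1 -> a j = Some w2 -> a' i = Some w1' -> a' j = Some w2' ->
     edge_equiv t (w1, w2) (w1', w2')).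

Lemma assign_equiv_ext t S a a' b b' :
  b =1 a -> b' =1 a' -> assign_equiv t S a a' -> assign_equiv t S b b'.
Proof.
move=> ba ba' [Hv He]; split => [i | i j w1 w2 w1' w2']; rewrite !ba !ba'; [exact: Hv | exact: He].
Qed.

Lemma assign_equiv_le s t S a a' :
  s <= t -> assign_equiv t S a a' -> assign_equiv s S a a'.
Proof.
move=> st [Hv He]; split => [i iS | i j w1 w2 w1' w2' iS jS ij ai aj a'i a'j].
  have [w [w' [ai a'i [z [z' Hz]]]]] := Hv i iS.
  by exists w, w'; split => //; exists z, z'; apply: edge_equiv_le Hz.
exact: edge_equiv_le st (He _ _ _ _ _ _ iS jS ij ai aj a'i a'j).
Qed.

Lemma assign_equiv_sub t S S' a a' :
  {subset S' <= S} -> assign_equiv t S a a' -> assign_equiv t S' a a'.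
Proof.
move=> sub [Hv He]; split => [i /sub/Hv // | i j w1 w2 w1' w2' /sub iS /sub jS].
exact: He.
Qed.

Lemma assign_equiv_clique t S a a' :
  assign_equiv t S a a' -> clique_sat e S a /\ clique_sat e' S a'.
Proof.
case=> Hv He; split; apply/clique_satP => i j iS jS ij;
  have [w1 [w1' [ai a'i _]]] := Hv i iS; have [w2 [w2' [aj a'j _]]] := Hv j jS;
  by rewrite ?ai ?aj ?a'i ?a'j; case: (He i j w1 w2 w1' w2' iS jS ij ai aj a'i a'j).
Qed.

Lemma assign_equiv_rcons t xs y a a' x x' :
  y \notin xs -> assign_equiv t xs a a' -> vertex_equiv t x x' ->
  (forall i w w', i \in xs -> a i = Some w -> a' i = Some w' -> edge_equiv t (w, x) (w', x')) ->
  assign_equiv t (rcons xs y) (upd a y x) (upd a' y x').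
Proof.
move=> yxs [Hv He] Hx Hxs.
have updE (U : finType) (b : var -> option U) z i : i \in xs -> upd b y z i = b i.
  by move=> ixs; apply: upd_other; apply: contraNneq yxs => <-.
split => [i | i j w1 w2 w1' w2'].
  rewrite mem_rcons inE => /predU1P[->|ixs]; first by exists x, x'; rewrite !upd_same.
  by rewrite !updE //; apply: Hv.
rewrite !mem_rcons !inE => /predU1P[->|ixs] /predU1P[->|jxs]; rewrite ?eqxx // => ij.
- rewrite !upd_same !updE // => -[] <- aj [] <- a'j.
  by apply: edge_equiv_rev; apply: Hxs jxs aj a'j.
- by rewrite !upd_same !updE // => ai [] <- a'i [] <-; apply: Hxs ixs ai a'i.
- by rewrite !updE //; apply: He ixs jxs ij.
Qed.

Definition witnesses_equiv t xs y (Q : pred T) (Q' : pred T') a a' : Prop :=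
  [/\ forall x, Q x -> clique_sat e (rcons xs y) (upd a y x),
      forall x', Q' x' -> clique_sat e' (rcons xs y) (upd a' y x') &
      forall x x', assign_equiv t (rcons xs y) (upd a y x) (upd a' y x') -> Q x = Q' x'].

Lemma card_witnesses_nil t y Q Q' a a' :
  eb_graph_eq t.+1 e e' -> witnesses_equiv t [::] y Q Q' a a' ->
  #|[set x | Q x]| = #|[set x' | Q' x']|.
Proof.
move=> G [_ _ QQ']; apply: card_vertices_eq G _ => w z w' z' Hwz; apply: QQ'.
apply: assign_equiv_rcons => //; exists z, z'; exact: edge_equiv_le Hwz.
Qed.

Lemma card_witnesses_one t i y Q Q' a a' :
  i != y -> assign_equiv t.+1 [:: i] a a' -> witnesses_equiv t [:: i] y Q Q' a a' ->
  #|[set x | Q x]| = #|[set x' | Q' x']|.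
Proof.
move=> iy Ha [cQ cQ' QQ']; have iyE : y \notin [:: i] by rewrite inE eq_sym.
have [Hv _] := Ha; have [w [w' [ai a'i [z [z' [_ _ [_ HN _ _]]]]]]] := Hv i (mem_head _ _).
rewrite -(setId_subset_id (witnesses_sub_nbhd iyE cQ (mem_head _ _) ai)).
rewrite -(setId_subset_id (witnesses_sub_nbhd iyE cQ' (mem_head _ _) a'i)).
apply: (mset_eq_card_sep HN) => x x'; rewrite !inE => ewx ewx' Hx.
have Ewx : edge_equiv t (w, x) (w', x') by [].
apply: QQ'; apply: assign_equiv_rcons => //.
- exact: assign_equiv_le (leqnSn t) Ha.
- by exists w, w'; apply: edge_equiv_rev.
- by move=> l v v'; rewrite inE => /eqP->; rewrite ai a'i => -[<-] [<-].
Qed.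

Lemma card_witnesses_two t i j y Q Q' a a' :
  uniq [:: i; j; y] -> assign_equiv t.+1 [:: i; j] a a' ->
  witnesses_equiv t [:: i; j] y Q Q' a a' ->
  #|[set x | Q x]| = #|[set x' | Q' x']|.
Proof.
rewrite /= !inE !negb_or => /and3P[/andP[ij iy] jy _] Ha [cQ cQ' QQ'].
have yij : y \notin [:: i; j] by rewrite !inE !negb_or ![y == _]eq_sym iy jy.
have [ixs jxs] : i \in [:: i; j] /\ j \in [:: i; j] by rewrite !inE !eqxx orbT.
have [Hv He] := Ha.
have [w1 [w1' [ai a'i _]]] := Hv i ixs; have [w2 [w2' [aj a'j _]]] := Hv j jxs.
have [_ _ [_ _ HC _]] := He i j w1 w2 w1' w2' ixs jxs ij ai aj a'i a'j.
have sub (U : finType) (f : rel U) (R : pred U) b v1 v2 :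
    (forall x, R x -> clique_sat f (rcons [:: i; j] y) (upd b y x)) ->
    b i = Some v1 -> b j = Some v2 -> [set x | R x] \subset nbhd f v1 :&: nbhd f v2.
  move=> cR bi bj; rewrite subsetI.
  by rewrite (witnesses_sub_nbhd yij cR ixs bi) (witnesses_sub_nbhd yij cR jxs bj).
rewrite -(setId_subset_id (sub _ _ _ _ _ _ cQ ai aj)).
rewrite -(setId_subset_id (sub _ _ _ _ _ _ cQ' a'i a'j)).
apply: (mset_eq_card_sep HC) => x x'.
rewrite !inE => /andP[e1x e2x] /andP[e1x' e2x'] [H1 H2].
have E1 : edge_equiv t (w1, x) (w1', x') by [].
apply: QQ'; apply: assign_equiv_rcons => //.
- exact: assign_equiv_le (leqnSn t) Ha.
- by exists w1, w1'; apply: edge_equiv_rev.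
- by move=> l v v'; rewrite !inE => /orP[]/eqP->; rewrite ?ai ?a'i ?aj ?a'j => -[<-] [<-].
Qed.

Lemma card_witnesses t xs y Q Q' a a' :
  eb_graph_eq t.+1 e e' -> uniq (rcons xs y) -> assign_equiv t.+1 xs a a' ->
  witnesses_equiv t xs y Q Q' a a' ->
  #|[set x | Q x]| = #|[set x' | Q' x']|.
Proof.
move=> G; case: xs => [|i [|j [|k xs]]] uq Ha wit.
- exact: card_witnesses_nil G wit.
- by apply: card_witnesses_one Ha wit; move: uq; rewrite /= inE andbT.
- exact: card_witnesses_two uq Ha wit.
- have := max_card (mem (rcons [:: i, j, k & xs] y)).
  by rewrite (card_uniqP uq) size_rcons card_ord.
Qed.

Lemma sat_equiv g : wf g -> forall t a a',
  eb_graph_eq t e e' -> qdepth g <= t -> assign_equiv t (tup g) a a' ->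
  sat e g a = sat e' g a'.
Proof.
elim: g => [xs|xs g IH|zs g IHg h IHh|zs g IHg h IHh|xs k y g IH] /= wf_g t a a' G dg Ha;
  have [-> ->] := assign_equiv_clique Ha => //=.
2,3: case/and3P: wf_g => wg wh uz; move: dg; rewrite geq_max => /andP[dg dh];
  by rewrite (IHg wg t a a' G dg (assign_equiv_sub (union_tuple_subl uz) Ha))
             (IHh wh t a a' G dh (assign_equiv_sub (union_tuple_subr uz) Ha)).
- by case/andP: wf_g => wg /eqP tg; rewrite (IH wg t a a') // tg.
- case/and4P: wf_g => wg _ uq /eqP tg; case: t G dg Ha => [//|t] G dg Ha.
  congr (_ <= _); apply: (card_witnesses G uq Ha); split.
  + by move=> x /sat_clique_tup; rewrite tg.
  + by move=> x /sat_clique_tup; rewrite tg.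
  + move=> x x' Hx; apply: (IH wg t _ _ (eb_graph_eq_le (leqnSn t) G) dg).
    by rewrite tg.
Qed.

Lemma same_type_of_assign_equiv t vs vs' :
  eb_graph_eq t e e' ->
  (forall xs, uniq xs -> size xs = size vs -> assign_equiv t xs (assign xs vs) (assign xs vs')) ->
  same_type t e e' vs vs'.
Proof.
move=> G Hvs g wg dg szg.
by rewrite /models (sat_equiv wg G dg (Hvs _ (wf_uniq wg) szg)).
Qed.

Lemma assign_equiv_vertex t i w w' :
  vertex_equiv t w w' -> assign_equiv t [:: i] (assign [:: i] [:: w]) (assign [:: i] [:: w']).
Proof.
move=> Hw; apply: (assign_equiv_ext (@assign_rcons _ [::] i [::] w _ _)
                                    (@assign_rcons _ [::] i [::] w' _ _)) => //.
exact: (@assign_equiv_rcons t [::] i).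
Qed.

Lemma same_type_nil t : eb_graph_eq t e e' -> same_type t e e' [::] [::].
Proof. by move=> G; apply: same_type_of_assign_equiv => // -[]. Qed.

Lemma same_type_vertex t w z w' z' :
  eb_graph_eq t e e' -> edge_equiv t (w, z) (w', z') -> same_type t e e' [:: w] [:: w'].
Proof.
move=> G Hwz; apply: same_type_of_assign_equiv => // -[|i []] // _ _.
by apply: assign_equiv_vertex; exists z, z'.
Qed.

Lemma same_type_edge t w z w' z' :
  eb_graph_eq t e e' -> edge_equiv t (w, z) (w', z') -> same_type t e e' [:: w; z] [:: w'; z'].
Proof.
move=> G Hwz; apply: same_type_of_assign_equiv => // -[|i [|j []]] //=.
rewrite andbT inE => ij _.
have ji : j \notin [:: i] by rewrite inE eq_sym.
apply: (assign_equiv_ext (@assign_rcons _ [:: i] j [:: w] z ji _)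
                         (@assign_rcons _ [:: i] j [:: w'] z' ji _)) => //.
apply: (@assign_equiv_rcons t [:: i] j) => //.
- by apply: assign_equiv_vertex; exists z, z'.
- by exists w, w'; apply: edge_equiv_rev.
- by move=> l v v'; rewrite inE => /eqP->; rewrite /assign inE eqxx /= eqxx => -[<-] [<-].
Qed.

End Equivalence.

Theorem mainTheorem7 (T T' : finType) (e : rel T) (e' : rel T')
  (u v : T) (u' v' : T') :
  is_graph e -> is_graph e' -> e u v -> e' u' v' ->
  forall t : nat,
    (eb_graph_eq t e e' -> same_type t e e' [::] [::]) /\
    (eb_eq t e e' (u, v) (u', v') -> eb_graph_eq t e e' ->
       [/\ same_type t e e' [:: u] [:: u'],
           same_type t e e' [:: v] [:: v'] &
           same_type t e e' [:: u; v] [:: u'; v']]).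
Proof.
move=> [sym [_ noiso]] [sym' [_ noiso']] euv euv' t.
split; first exact: same_type_nil.
move=> Huv G; have Euv : edge_equiv e e' t (u, v) (u', v') by [].
split.
- exact: same_type_vertex Euv.
- exact: same_type_vertex (edge_equiv_rev sym sym' Euv).
- exact: same_type_edge Euv.
Qed.
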